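(* Let $N\ge1$, $\lambda,\lambda',\mu,a,b\in\mathbb{K}$ with $\mu\neq0$, $a\ne0$, $b\notin\{-1,-2,\ldots\}$. Then the Lie algebras $\mathfrak{g}^{(1)}(N,\lambda,a,b)_+$ and $\mathfrak{g}^{(3)}(N,\lambda',\mu)_+$ are both isomorphic to the semidirect product $\left(V_{-\frac1N}\oplus\cdots\oplus V_{-\frac{N-1}{N}}\right)\rtimes\mathfrak{g}_{FdB}$ (which is just $\mathfrak{g}_{FdB}$ when $N=1$).
   Context: Base field $\mathbb{K}$ of characteristic zero. On $\mathbb{K}[X]$: $\mathfrak{g}^{(1)}(N,\lambda,a,b)$ has $X^i\bullet X^j=i\lambda X^i$ if $j=0$, $\frac{ai}{j/N+b}X^{i+j}$ if $j\ne0$ and $N\mid j$, $0$ otherwise; $\mathfrak{g}^{(3)}(N,\lambda',\mu)$ has $X^i\bullet X^j=i\lambda' X^i$ if $j=0$, $i\mu X^{i+j}$ if $j\neq0$ and $N\mid j$, $0$ otherwise. For such a preLie product, $\mathfrak{g}_+$ denotes $\mathbb{K}[X]_+=\mathrm{Vect}(X^i,i\ge1)$ with Lie bracket $[P,Q]=P\bullet Q-Q\bullet P$. $\mathfrak{g}_{FdB}$ is the Lie algebra with basis $(e_i)_{i\ge1}$ and $[e_i,e_j]=(i-j)e_{i+j}$. For $\alpha\in\mathbb{K}$, $V_\alpha$ is the right $\mathfrak{g}_{FdB}$-module with basis $(f_i)_{i\ge1}$ and $f_i.e_j=(i+\alpha)f_{i+j}$. For a Lie algebra $\mathfrak{g}$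 and a right $\mathfrak{g}$-module $M$, $M\rtimes\mathfrak{g}$ is $M\oplus\mathfrak{g}$ with $M$ abelian, $[m,x]=m.x$ for $m\in M$, $x\in\mathfrak{g}$, and the bracket of $\mathfrak{g}$ on $\mathfrak{g}$. *)

From HB Require Import structures.
From mathcomp Require Import all_boot all_order all_algebra.
Set Implicit Arguments. Unset Strict Implicit. Unset Printing Implicit Defensive.
Import Order.TTheory GRing.Theory Num.Theory.
Local Open Scope ring_scope.

(* K[X] is modelled by {poly K}; X^i is 'X^i.
   K[X]_+ = Vect(X^i, i >= 1) is the subspace of polynomials with zero constant term. *)
Definition plus_part (K : fieldType) : pred {poly K} := fun p => p`_0 == 0.

Definition bilin (K : fieldType) (m : nat -> nat -> {poly K}) (p q : {poly K}) : {poly K} :=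
  \sum_(i < size p) \sum_(j < size q) (p`_i * q`_j) *: m i j.

Definition g1_mon (K : fieldType) (N : nat) (lam a b : K) (i j : nat) : {poly K} :=
  if j == 0%N then (i%:R * lam) *: 'X^i
  else if (N %| j)%N then (a * i%:R / (j%:R / N%:R + b)) *: 'X^(i + j)
  else 0.

Definition g3_mon (K : fieldType) (N : nat) (lam' mu : K) (i j : nat) : {poly K} :=
  if j == 0%N then (i%:R * lam') *: 'X^i
  else if (N %| j)%N then (i%:R * mu) *: 'X^(i + j)
  else 0.

Definition g1_pl (K : fieldType) N lam a b := bilin (@g1_mon K N lam a b).
Definition g3_pl (K : fieldType) N lam' mu := bilin (@g3_mon K N lam' mu).

Definition preLie_br (K : fieldType) (pl : {poly K} -> {poly K} -> {poly K}) p q :=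
  pl p q - pl q p.

(* g_FdB: basis e_i (i >= 1) encoded as 'X^i (elements: polys with zero constant term),
   [e_i, e_j] = (i - j) e_{i+j} *)
Definition fdb_br (K : fieldType) : {poly K} -> {poly K} -> {poly K} :=
  bilin (fun i j => (i%:R - j%:R) *: 'X^(i + j)).

(* V_alpha: basis f_i (i >= 1) encoded as 'X^i; right action f_i . e_j = (i + alpha) f_{i+j} *)
Definition Vact (K : fieldType) (alpha : K) : {poly K} -> {poly K} -> {poly K} :=
  bilin (fun i j => (i%:R + alpha) *: 'X^(i + j)).

(* (V_{-1/N} (+) ... (+) V_{-(N-1)/N}) x| g_FdB : an element is a finite function
   F : 'I_N -> {poly K}, where component 0 is the g_FdB part and component k
   (1 <= k <= N-1) is the V_{-k/N} part; all components have zero constant term. *)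
Definition SD (K : fieldType) (N : nat) := {ffun 'I_N -> {poly K}}.

Definition SD_dom (K : fieldType) (N : nat) : pred (SD K N) :=
  fun F => [forall k, (F k)`_0 == 0].

Definition SD_g (K : fieldType) (N : nat) (F : SD K N) : {poly K} :=
  \sum_(l : 'I_N | val l == 0%N) F l.

Definition SD_br (K : fieldType) (N : nat) (F G : SD K N) : SD K N :=
  [ffun k : 'I_N =>
     if val k == 0%N then fdb_br (SD_g F) (SD_g G)
     else Vact (- (k%:R / N%:R)) (F k) (SD_g G) - Vact (- (k%:R / N%:R)) (G k) (SD_g F)].

Definition lie_iso_onto (K : fieldType) (T : lmodType K) (D : pred T)
    (brT : T -> T -> T) (brE : {poly K} -> {poly K} -> {poly K})
    (psi : T -> {poly K}) : Prop :=
  [/\ {in D &, forall x y, forall c : K, psi (c *: x + y) = c *: psi x + psi y},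
      {in D &, injective psi},
      {in D, forall x, plus_part (psi x)},
      (forall p, plus_part p -> exists2 x, x \in D & psi x = p) &
      {in D &, forall x y, psi (brT x y) = brE (psi x) (psi y)}].

(* Both products satisfy X^p . X^q = 0 unless N divides q.  Send e_i in g_FdB to
   c_i X^(N i) and f_i in V_(-k/N), 0 < k < N, to X^(N i - k); since every n > 0 is
   uniquely N i - k with i > 0 and 0 <= k < N, this is a linear bijection onto K[X]_+.  The images of
   the V-parts commute, their exponents not being multiples of N, and the normalisation
   c_i = 1 / (mu N) for g^(3), c_i = (i + b) / (a N) for g^(1) gives
   [X^(N i - k), c_j X^(N j)] = (i - k/N) X^(N (i + j) - k) and
   [c_i X^(N i), c_j X^(N j)] = (i - j) c_(i+j) X^(N (i + j)). *)

From HB Require Import structures.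
From mathcomp Require Import all_boot all_order all_algebra.
From mathcomp Require Import ring zify.
Import GRing.Theory.
Local Open Scope ring_scope.
Set Implicit Arguments. Unset Strict Implicit. Unset Printing Implicit Defensive.

Section MonomialExtension.
Variables (K : fieldType) (V : lmodType K).

Definition mon_ext (f : nat -> V) (p : {poly K}) : V := \sum_(i < size p) p`_i *: f i.

Lemma mon_ext_widen f (p : {poly K}) n :
  (size p <= n)%N -> mon_ext f p = \sum_(i < n) p`_i *: f i.
Proof.
move=> hn; rewrite /mon_ext (big_ord_widen _ (fun i => p`_i *: f i) hn) big_mkcond /=.
apply: eq_bigr => i _; case: ifP => // /negbT; rewrite -leqNgt => hi.
by rewrite nth_default // scale0r.
Qed.

Fact mon_ext_is_linear f : linear (mon_ext f).
Proof.
move=> c p q; set n := maxn (size p) (size q).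
have hp : (size p <= n)%N by rewrite leq_maxl.
have hq : (size q <= n)%N by rewrite leq_maxr.
have hpq : (size (c *: p + q)%R <= n)%N.
  by rewrite (leq_trans (size_polyD _ _)) // geq_max hq (leq_trans (size_scale_leq _ _)).
rewrite !(mon_ext_widen _ hp, mon_ext_widen _ hq, mon_ext_widen _ hpq).
rewrite scaler_sumr -big_split; apply: eq_bigr => i _.
by rewrite coefD coefZ scalerDl scalerA.
Qed.

HB.instance Definition _ f :=
  GRing.isLinear.Build K {poly K} V _ (mon_ext f) (mon_ext_is_linear f).

Lemma mon_extXn f i : mon_ext f 'X^i = f i.
Proof.
rewrite (@mon_ext_widen _ _ i.+1) ?size_polyXn // big_ord_recr /= big1.
  by rewrite add0r coefXn eqxx scale1r.
by move=> j _; rewrite coefXn (ltn_eqF (ltn_ord j)) scale0r.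
Qed.

Lemma eq_linear_plus (L1 L2 : {poly K} -> V) : linear L1 -> linear L2 ->
    (forall i, (0 < i)%N -> L1 'X^i = L2 'X^i) ->
  forall p : {poly K}, p`_0 = 0 -> L1 p = L2 p.
Proof.
move=> linL1 linL2 eqX p p0.
pose M1 : {linear {poly K} -> V} := HB.pack L1 (GRing.isLinear.Build _ _ _ _ L1 linL1).
pose M2 : {linear {poly K} -> V} := HB.pack L2 (GRing.isLinear.Build _ _ _ _ L2 linL2).
rewrite -[p]coefK poly_def.
change (M1 (\sum_(i < size p) p`_i *: 'X^i) = M2 (\sum_(i < size p) p`_i *: 'X^i)).
rewrite !linear_sum; apply: eq_bigr => -[[|i] ?] _; rewrite !linearZ /=.
  by rewrite p0 !scale0r.
by rewrite eqX.
Qed.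

Lemma eq_bilinear_plus (B1 B2 : {poly K} -> {poly K} -> V) :
    bilinear_for *:%R *:%R B1 -> bilinear_for *:%R *:%R B2 ->
    (forall i j, (0 < i)%N -> (0 < j)%N -> B1 'X^i 'X^j = B2 'X^i 'X^j) ->
  forall p q : {poly K}, p`_0 = 0 -> q`_0 = 0 -> B1 p q = B2 p q.
Proof.
move=> [linB1l linB1r] [linB2l linB2r] eqXX p q p0 q0.
apply: (eq_linear_plus (linB1l q) (linB2l q)) p0 => i i_gt0.
apply: (eq_linear_plus (linB1r _) (linB2r _)) q0 => j j_gt0; exact: eqXX.
Qed.

End MonomialExtension.

Fact preLie_br_is_bilinear (K : fieldType)
    (B : {bilinear {poly K} -> {poly K} -> {poly K}}) :
  bilinear_for *:%R *:%R (preLie_br B).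
Proof.
by split=> [q|p] c u v; rewrite /preLie_br linearPl linearPr opprD addrACA -scalerBr.
Qed.

Lemma preLie_brC (K : fieldType) (pl : {poly K} -> {poly K} -> {poly K}) u v :
  preLie_br pl u v = - preLie_br pl v u.
Proof. by rewrite /preLie_br opprB. Qed.

Section MonomialBilinear.
Variables (K : fieldType) (m : nat -> nat -> {poly K}).

Lemma bilin_mon_extl p q : bilin m p q = mon_ext (fun i => mon_ext (m i) q) p.
Proof.
rewrite /bilin /mon_ext; apply: eq_bigr => i _; rewrite scaler_sumr.
by apply: eq_bigr => j _; rewrite scalerA.
Qed.

Lemma bilin_mon_extr p q : bilin m p q = mon_ext (fun j => mon_ext (m^~ j) p) q.
Proof.
rewrite /bilin /mon_ext exchange_big; apply: eq_bigr => j _; rewrite scaler_sumr.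
by apply: eq_bigr => i _; rewrite scalerA mulrC.
Qed.

Fact bilin_is_bilinear : bilinear_for *:%R *:%R (bilin m).
Proof.
split=> [q|p] c u v; first by rewrite !bilin_mon_extl linearP.
by rewrite !bilin_mon_extr linearP.
Qed.

HB.instance Definition _ :=
  bilinear_isBilinear.Build K {poly K} {poly K} {poly K} *:%R *:%R (bilin m) bilin_is_bilinear.

Lemma bilinXX i j : bilin m 'X^i 'X^j = m i j.
Proof. by rewrite bilin_mon_extl !mon_extXn. Qed.

HB.instance Definition _ := bilinear_isBilinear.Build K {poly K} {poly K} {poly K}
  *:%R *:%R (preLie_br (bilin m)) (preLie_br_is_bilinear (bilin m)).

Lemma preLie_br_scaleXX s t e f :
  preLie_br (bilin m) (s *: 'X^e) (t *: 'X^f) = (s * t) *: (m e f - m f e).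
Proof. by rewrite linearZl linearZr /= /preLie_br !bilinXX scalerA. Qed.

End MonomialBilinear.

Lemma ndvdn_mulnB N i k : (0 < i)%N -> (0 < k < N)%N -> ~~ (N %| N * i - k)%N.
Proof.
move=> i_gt0 /andP[k_gt0 kN]; apply/negP => dvd_Nik.
have : (N %| N * i - k + k)%N by rewrite subnK ?dvdn_mulr //; nia.
by rewrite (dvdn_addr _ dvd_Nik) => /(dvdn_leq k_gt0); rewrite leqNgt kN.
Qed.

Lemma mulnB_gt0 N i k : (0 < i)%N -> (k < N)%N -> (0 < N * i - k)%N.
Proof. by move=> *; nia. Qed.

Section SemidirectToPoly.
Variables (K : fieldType) (N : nat) (c : nat -> K).
Hypotheses (N_gt0 : (0 < N)%N) (c_neq0 : forall i, (0 < i)%N -> c i != 0).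

Definition sd_scale (k i : nat) : K := if k == 0%N then c i else 1.

Definition sd_mon (k i : nat) : {poly K} := sd_scale k i *: 'X^(N * i - k).

Lemma sd_mon0 i : sd_mon 0 i = c i *: 'X^(N * i).
Proof. by rewrite /sd_mon subn0. Qed.

Lemma sd_mon_gt0 k i : (0 < k)%N -> sd_mon k i = 'X^(N * i - k).
Proof. by move=> k_gt0; rewrite /sd_mon /sd_scale eqn0Ngt k_gt0 scale1r. Qed.

Definition sd_to_poly (F : SD K N) : {poly K} := \sum_(k < N) mon_ext (sd_mon k) (F k).

Fact sd_to_poly_is_linear : linear sd_to_poly.
Proof.
move=> a F G; rewrite /sd_to_poly scaler_sumr -big_split; apply: eq_bigr => k _.
by rewrite !ffunE linearP.
Qed.

HB.instance Definition _ :=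
  GRing.isLinear.Build K (SD K N) {poly K} _ sd_to_poly sd_to_poly_is_linear.

Definition sd_single (k : nat) (p : {poly K}) : SD K N :=
  [ffun l : 'I_N => if val l == k then p else 0].

Fact sd_single_is_linear k : linear (sd_single k).
Proof.
move=> a p q; apply/ffunP => l; rewrite !ffunE.
by case: ifP; rewrite ?scaler0 ?addr0.
Qed.

HB.instance Definition _ k :=
  GRing.isLinear.Build K {poly K} (SD K N) _ (sd_single k) (sd_single_is_linear k).

Lemma sd_to_poly_single k p :
  (k < N)%N -> sd_to_poly (sd_single k p) = mon_ext (sd_mon k) p.
Proof.
move=> kN; rewrite /sd_to_poly (bigD1 (Ordinal kN)) //= ffunE eqxx big1 ?addr0 //.
move=> l l_neq_k; rewrite ffunE ifF ?linear0 //.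
by apply: contraNF l_neq_k => /eqP l_eq_k; apply/eqP/val_inj.
Qed.

Lemma sd_sum_single (F : SD K N) : F = \sum_(k < N) sd_single k (F k).
Proof.
apply/ffunP => l; rewrite sum_ffunE (bigD1 l) //= ffunE eqxx big1 ?addr0 //.
by move=> k k_neq_l; rewrite ffunE ifF //; apply: contraNF k_neq_l => /eqP/val_inj->.
Qed.

(* Every n > 0 is uniquely N * q - r with q > 0 and 0 <= r < N: q is the ceiling of n / N. *)
Definition sd_quo (n : nat) : nat := ((n + N.-1) %/ N)%N.
Definition sd_rem (n : nat) : nat := (N * sd_quo n - n)%N.

Lemma sd_quo_mon i k : (0 < i)%N -> (k < N)%N -> sd_quo (N * i - k) = i.
Proof. by rewrite /sd_quo => *; nia. Qed.

Lemma sd_rem_mon i k : (0 < i)%N -> (k < N)%N -> sd_rem (N * i - k) = k.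
Proof. by move=> i_gt0 kN; rewrite /sd_rem sd_quo_mon //; nia. Qed.

Lemma sd_quo_gt0 n : (0 < n)%N -> (0 < sd_quo n)%N.
Proof. by rewrite /sd_quo => *; nia. Qed.

Lemma sd_rem_lt n : (sd_rem n < N)%N.
Proof. by rewrite /sd_rem /sd_quo; nia. Qed.

Lemma sd_quo_remK n : (N * sd_quo n - sd_rem n)%N = n.
Proof. by rewrite /sd_rem /sd_quo; nia. Qed.

Definition sd_of_mon (n : nat) : SD K N :=
  sd_single (sd_rem n) ((sd_scale (sd_rem n) (sd_quo n))^-1 *: 'X^(sd_quo n)).

Definition poly_to_sd : {poly K} -> SD K N := mon_ext sd_of_mon.

HB.instance Definition _ := GRing.Linear.copy poly_to_sd (mon_ext sd_of_mon).

Lemma poly_to_sdXn n : poly_to_sd 'X^n = sd_of_mon n.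
Proof. exact: mon_extXn. Qed.

Lemma sd_scale_neq0 k i : (0 < i)%N -> sd_scale k i != 0.
Proof. by move=> /c_neq0; rewrite /sd_scale; case: ifP; rewrite ?oner_neq0. Qed.

Lemma poly_to_sd_mon k i :
  (k < N)%N -> (0 < i)%N -> poly_to_sd (sd_mon k i) = sd_single k 'X^i.
Proof.
move=> kN i_gt0; rewrite /sd_mon linearZ /= poly_to_sdXn /sd_of_mon.
rewrite sd_quo_mon // sd_rem_mon //.
by rewrite linearZ /= scalerA mulfV ?sd_scale_neq0 // scale1r.
Qed.

Lemma sd_to_polyK : {in SD_dom (N:=N), cancel sd_to_poly poly_to_sd}.
Proof.
move=> F /forallP F_dom; rewrite {2}[F]sd_sum_single linear_sum; apply: eq_bigr => k _.
apply: (eq_linear_plus (linearP (poly_to_sd \o mon_ext (sd_mon k))) (linearP (sd_single k)))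
  (eqP (F_dom k)) => i i_gt0.
by rewrite /= mon_extXn poly_to_sd_mon.
Qed.

Lemma poly_to_sdK : {in plus_part (K:=K), cancel poly_to_sd sd_to_poly}.
Proof.
move=> p /eqP p0.
apply: (eq_linear_plus (linearP (sd_to_poly \o poly_to_sd)) (linearP idfun)) p0.
move=> n n_gt0 /=.
rewrite poly_to_sdXn /sd_of_mon sd_to_poly_single ?sd_rem_lt //.
rewrite linearZ /= mon_extXn /sd_mon scalerA mulVf ?scale1r ?sd_quo_remK //.
exact/sd_scale_neq0/sd_quo_gt0.
Qed.

Lemma sd_to_poly_plus F : F \in SD_dom (N:=N) -> plus_part (sd_to_poly F).
Proof.
move=> /forallP F_dom; apply/eqP; rewrite coef_sum big1 // => k _.
rewrite /mon_ext coef_sum big1 // => -[[|i] ?] _ /=.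
  by rewrite (eqP (F_dom k)) scale0r coef0.
by rewrite !coefZ coefXn eq_sym eqn0Ngt mulnB_gt0 ?mulr0.
Qed.

Lemma poly_to_sd_dom p : plus_part p -> poly_to_sd p \in SD_dom (N:=N).
Proof.
move=> /eqP p0; apply/forallP => l; rewrite /poly_to_sd /mon_ext sum_ffunE coef_sum.
apply/eqP/big1 => -[[|n] ?] _ /=; first by rewrite ffunE p0 scale0r coef0.
rewrite !ffunE; case: ifP => _; last by rewrite scaler0 coef0.
by rewrite !coefZ coefXn eq_sym eqn0Ngt sd_quo_gt0 ?mulr0.
Qed.

Variable m : nat -> nat -> {poly K}.
Local Notation br := (preLie_br (bilin m)).

Hypothesis m_ndvd : forall p q, ~~ (N %| q)%N -> m p q = 0.
Hypothesis br_gg : forall i j, (0 < i)%N -> (0 < j)%N ->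
  br (sd_mon 0 i) (sd_mon 0 j) = (i%:R - j%:R) *: sd_mon 0 (i + j).
Hypothesis br_vg : forall k i j, (0 < k < N)%N -> (0 < i)%N -> (0 < j)%N ->
  br (sd_mon k i) (sd_mon 0 j) = (i%:R - k%:R / N%:R) *: sd_mon k (i + j).

Lemma br_comp_gg : forall p q : {poly K}, p`_0 = 0 -> q`_0 = 0 ->
  br (mon_ext (sd_mon 0) p) (mon_ext (sd_mon 0) q) = mon_ext (sd_mon 0) (fdb_br p q).
Proof.
apply: eq_bilinear_plus.
- by split=> [q|p] a u v /=; rewrite linearP ?linearPl ?linearPr.
- by split=> [q|p] a u v /=; rewrite /fdb_br ?linearPl ?linearPr linearP.
by move=> i j i_gt0 j_gt0; rewrite !mon_extXn /fdb_br bilinXX linearZ /= mon_extXn br_gg.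
Qed.

Lemma br_comp_vg k : (0 < k < N)%N -> forall p q : {poly K}, p`_0 = 0 -> q`_0 = 0 ->
  br (mon_ext (sd_mon k) p) (mon_ext (sd_mon 0) q) =
  mon_ext (sd_mon k) (Vact (- (k%:R / N%:R)) p q).
Proof.
move=> k_bounds; apply: eq_bilinear_plus.
- by split=> [q|p] a u v /=; rewrite linearP ?linearPl ?linearPr.
- by split=> [q|p] a u v /=; rewrite /Vact ?linearPl ?linearPr linearP.
by move=> i j i_gt0 j_gt0; rewrite !mon_extXn /Vact bilinXX linearZ /= mon_extXn br_vg.
Qed.

Lemma br_comp_vv k l : (0 < k < N)%N -> (0 < l < N)%N ->
  forall p q : {poly K}, p`_0 = 0 -> q`_0 = 0 ->
  br (mon_ext (sd_mon k) p) (mon_ext (sd_mon l) q) = 0.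
Proof.
move=> k_bounds l_bounds; apply: (eq_bilinear_plus (B2 := fun _ _ => 0)).
- by split=> [q|p] a u v /=; rewrite linearP ?linearPl ?linearPr.
- by split=> [q|p] a u v; rewrite addr0; exact/esym/scaler0.
move=> i j i_gt0 j_gt0; rewrite !mon_extXn preLie_br_scaleXX.
by rewrite !m_ndvd ?ndvdn_mulnB // subrr scaler0.
Qed.

Lemma sd_to_poly_br : {in SD_dom (N:=N) &, forall F G,
  sd_to_poly (SD_br F G) = br (sd_to_poly F) (sd_to_poly G)}.
Proof.
move=> F G /forallP F_dom /forallP G_dom; pose k0 := Ordinal N_gt0.
have k_bounds (k : 'I_N) : k != k0 -> (0 < k < N)%N.
  move=> k_neq0; rewrite ltn_ord andbT lt0n.
  by apply: contraNneq k_neq0 => k_eq0; apply/eqP/val_inj.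
have SD_gE H : SD_g H = H k0 by rewrite /SD_g (big_pred1 k0) // => l; rewrite -val_eqE.
have sd_to_polyE H : sd_to_poly H =
    mon_ext (sd_mon 0) (H k0) + \sum_(k < N | k != k0) mon_ext (sd_mon k) (H k).
  by rewrite /sd_to_poly (bigD1 k0).
rewrite !sd_to_polyE ffunE /= !SD_gE linearDl !linearDr.
rewrite !(linear_sumlz _ _ _ (fun k : 'I_N => k != k0)).
rewrite (linear_sumr _ _ _ (fun k : 'I_N => k != k0)) /=.
rewrite br_comp_gg ?(eqP (F_dom _)) ?(eqP (G_dom _)) // -!addrA; congr (_ + _).
rewrite [X in _ + (_ + X)]big1 ?addr0 => [|k k_neq0]; last first.
  rewrite (linear_sumr _ _ _ (fun k : 'I_N => k != k0)) big1 // => l l_neq0 /=.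
  by rewrite br_comp_vv ?k_bounds ?(eqP (F_dom _)) ?(eqP (G_dom _)).
rewrite addrC -big_split; apply: eq_bigr => k k_neq0.
rewrite ffunE ifF; last by apply: contraNF k_neq0 => /eqP k_eq0; apply/eqP/val_inj.
rewrite !SD_gE linearB /= [br (mon_ext (sd_mon 0) _) _]preLie_brC.
by rewrite !br_comp_vg ?k_bounds ?(eqP (F_dom _)) ?(eqP (G_dom _)).
Qed.

Lemma sd_lie_iso :
  exists psi : SD K N -> {poly K}, lie_iso_onto (@SD_dom K N) (@SD_br K N) br psi.
Proof.
exists sd_to_poly; split.
- by move=> F G _ _ a; rewrite linearP.
- exact: can_in_inj sd_to_polyK.
- exact: sd_to_poly_plus.
- by move=> p p_plus; exists (poly_to_sd p); [exact: poly_to_sd_dom | exact: poly_to_sdK].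
- exact: sd_to_poly_br.
Qed.

End SemidirectToPoly.

Section G3.
Variables (K : fieldType) (N : nat) (lam' mu : K).
Hypotheses (N_gt0 : (0 < N)%N) (N_neq0 : N%:R != 0 :> K) (mu_neq0 : mu != 0).

Lemma g3_mon_ndvd p q : ~~ (N %| q)%N -> g3_mon N lam' mu p q = 0.
Proof.
by move=> N_ndvd; rewrite /g3_mon (negbTE N_ndvd) ifF //; apply: contraNF N_ndvd => /eqP->.
Qed.

Lemma g3_mon_mulN p j :
  (0 < j)%N -> g3_mon N lam' mu p (N * j) = (p%:R * mu) *: 'X^(p + N * j).
Proof. by move=> j_gt0; rewrite /g3_mon muln_eq0 !eqn0Ngt N_gt0 j_gt0 dvdn_mulr. Qed.

Lemma g3_lie_iso : exists psi : SD K N -> {poly K},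
  lie_iso_onto (@SD_dom K N) (@SD_br K N) (preLie_br (g3_pl N lam' mu)) psi.
Proof.
apply: (@sd_lie_iso K N (fun=> (mu * N%:R)^-1)) => //.
- by move=> i _; rewrite invr_eq0 mulf_neq0.
- exact: g3_mon_ndvd.
- move=> i j i_gt0 j_gt0; rewrite !sd_mon0 preLie_br_scaleXX !g3_mon_mulN //.
  rewrite (addnC (N * j)) -mulnDr -scalerBl !scalerA; congr (_ *: _).
  by rewrite !natrM; field; rewrite N_neq0 mu_neq0.
move=> k i j /andP[k_gt0 kN] i_gt0 j_gt0.
rewrite sd_mon0 !sd_mon_gt0 // -[X in preLie_br _ X]scale1r preLie_br_scaleXX.
rewrite g3_mon_mulN // g3_mon_ndvd ?ndvdn_mulnB ?k_gt0 // subr0 scalerA.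
have -> : (N * i - k + N * j = N * (i + j) - k)%N by nia.
congr (_ *: _); rewrite natrB ?natrM; last by nia.
by field; rewrite N_neq0 mu_neq0.
Qed.

End G3.

Section G1.
Variables (K : fieldType) (N : nat) (lam a b : K).
Hypotheses (N_gt0 : (0 < N)%N) (N_neq0 : N%:R != 0 :> K) (a_neq0 : a != 0).
Hypothesis b_neq : forall n : nat, b != - (n.+1)%:R.

Lemma g1_mon_ndvd p q : ~~ (N %| q)%N -> g1_mon N lam a b p q = 0.
Proof.
by move=> N_ndvd; rewrite /g1_mon (negbTE N_ndvd) ifF //; apply: contraNF N_ndvd => /eqP->.
Qed.

Lemma g1_mon_mulN p j : (0 < j)%N ->
  g1_mon N lam a b p (N * j) = (a * p%:R / (j%:R + b)) *: 'X^(p + N * j).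
Proof.
move=> j_gt0; rewrite /g1_mon muln_eq0 !eqn0Ngt N_gt0 j_gt0 dvdn_mulr //=.
by rewrite natrM [_ * j%:R]mulrC mulfK.
Qed.

Lemma natr_addr_neq0 i : (0 < i)%N -> i%:R + b != 0.
Proof. by case: i => // i _; rewrite addrC addr_eq0. Qed.

Lemma g1_lie_iso : exists psi : SD K N -> {poly K},
  lie_iso_onto (@SD_dom K N) (@SD_br K N) (preLie_br (g1_pl N lam a b)) psi.
Proof.
apply: (@sd_lie_iso K N (fun i => (i%:R + b) / (a * N%:R))) => //.
- by move=> i i_gt0; rewrite mulf_neq0 ?invr_eq0 ?mulf_neq0 ?natr_addr_neq0.
- exact: g1_mon_ndvd.
- move=> i j i_gt0 j_gt0; rewrite !sd_mon0 preLie_br_scaleXX !g1_mon_mulN //.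
  rewrite (addnC (N * j)) -mulnDr -scalerBl !scalerA; congr (_ *: _).
  by rewrite !natrM natrD; field; rewrite N_neq0 !natr_addr_neq0 ?a_neq0.
move=> k i j /andP[k_gt0 kN] i_gt0 j_gt0.
rewrite sd_mon0 !sd_mon_gt0 // -[X in preLie_br _ X]scale1r preLie_br_scaleXX.
rewrite g1_mon_mulN // g1_mon_ndvd ?ndvdn_mulnB ?k_gt0 // subr0 scalerA.
have -> : (N * i - k + N * j = N * (i + j) - k)%N by nia.
congr (_ *: _); rewrite natrB ?natrM; last by nia.
by field; rewrite N_neq0 natr_addr_neq0 ?a_neq0.
Qed.

End G1.

Theorem mainTheorem15 (K : fieldType) (hK : [pchar K] =i pred0)
    (N : nat) (hN : (1 <= N)%N) (lam lam' mu a b : K)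
    (hmu : mu != 0) (ha : a != 0) (hb : forall n : nat, b != - (n.+1)%:R) :
  (exists psi : SD K N -> {poly K},
      lie_iso_onto (@SD_dom K N) (@SD_br K N) (preLie_br (g1_pl N lam a b)) psi) /\
  (exists psi : SD K N -> {poly K},
      lie_iso_onto (@SD_dom K N) (@SD_br K N) (preLie_br (g3_pl N lam' mu)) psi).
Proof.
have N_neq0 : N%:R != 0 :> K by rewrite (pcharf0P K).1 // -lt0n.
by split; [exact: g1_lie_iso | exact: g3_lie_iso].
Qed.
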